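(* Let $n\ge 3$ and let $c=(c_1,\ldots,c_n)\in\{0,1,2\}^n$ be a stable configuration on the wheel graph $W_n$. Then $c$ is SSM-recurrent (resp. ASM-recurrent) if and only if there exists an orientation (resp. an acyclic orientation) $\mathcal O$ of the cycle graph $C_n$ such that $c_i\ge \mathrm{in}_{\mathcal O}(i)$ for all $i\in[n]$, where $\mathrm{in}_{\mathcal O}(i)$ is the in-degree of $i$ in $\mathcal O$.
   Context: The cycle graph $C_n$ has vertex set $[n]=\{1,\ldots,n\}$ and edges $\{i,i+1\}$ ($1\le i\le n-1$) and $\{n,1\}$. The wheel graph $W_n$ is obtained from $C_n$ by adding a vertex $0$ (the sink) adjacent to every vertex of $[n]$. Sandpile setting: a configuration on a graph with vertex set $\{0,\ldots,n\}$ and sink $0$ is $c\in\mathbb{Z}_{\ge0}^n$; vertex $i$ is stable if $c_i<\deg(i)$, $c$ stable if all $i\in[n]$ are (on $W_n$ the stable configurations are exactly $\{0,1,2\}^n$). ASM: an unstable vertex loses $\deg(i)$ grains and sends one to each neighbour (grains to the sink vanish); stabilisation is order independent; the ASM Markov chain on stable configurations adds a grain at a vertex chosen by a fully supported distribution on $[n]$ and stabilises. SSM with parameter $p\in(0,1)$: a toppling vertex sends, independently for each neighbour, one grain to that neighbour with probability $p$ (else keeps it); Markov chain defined likewise. ASM-/SSM-recurrent = recurrent state of the respective chain. Known characterisation: a stable $c$ is ASM-recurrent iff there is an acyclic orientation $\mathcal O$ of the whole graph in which $0$ is the unique vertex with all incident edges incoming ($0$-rooted) and $c_i\ge\mathrm{in}_{\mathcal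 O}(i)$ for all $i\in[n]$; SSM-recurrent iff there is such a $0$-rooted orientation, not necessarily acyclic. *)

From mathcomp Require Import all_boot.
From Stdlib Require Import Relations.
Set Implicit Arguments. Unset Strict Implicit. Unset Printing Implicit Defensive.

(* Vertices [n] = {1,..,n} are represented by 'I_n (vertex k+1 <-> ordinal k);
   the sink 0 of W_n is not represented in configurations.
   In C_n, the neighbours of i are ordS i (i+1 mod n) and ord_pred i (i-1 mod n).
   In W_n every non-sink vertex has degree 3 (its two cycle neighbours and the sink). *)

Definition config (n : nat) := {ffun 'I_n -> nat}.

Definition wheel_deg : nat := 3.

Definition stable n (c : config n) : Prop := forall i, c i < wheel_deg.

Definition add_grain n (c : config n) (i : 'I_n) : config n :=
  [ffun j => c j + (j == i)].

(* SSM toppling of vertex i on W_n: for each neighbour, independently, a grain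
   is either sent (bit true) or kept (bit false).
   bl: to ord_pred i, br: to ordS i, bs: to the sink (grain vanishes). *)
Definition topple n (c : config n) (i : 'I_n) (bl br bs : bool) : config n :=
  [ffun j => (if j == i then c j - (bl + br + bs) else c j)
             + ((j == ord_pred i) && bl) + ((j == ordS i) && br)].

(* one SSM toppling step at an unstable vertex, with a positive-probability
   choice of sent grains (p in (0,1) makes every choice positive-probability) *)
Definition ssm_topple_step n (c d : config n) : Prop :=
  exists i : 'I_n, wheel_deg <= c i /\ exists bl br bs, d = topple c i bl br bs.

Definition asm_topple_step n (c d : config n) : Prop :=
  exists i : 'I_n, wheel_deg <= c i /\ d = topple c i true true true.

Definition stabilises_to n (step : relation (config n)) (c d : config n) : Prop :=
  clos_refl_trans _ step c d /\ stable d.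

(* transition of the Markov chain on stable configurations with positive
   probability: add a grain at some vertex (the distribution is fully
   supported) and stabilise *)
Definition chain_step n (step : relation (config n)) (c d : config n) : Prop :=
  stable c /\ exists i : 'I_n, stabilises_to step (add_grain c i) d.

(* recurrent state of a finite Markov chain: every state reachable from c
   can reach c back *)
Definition recurrent n (step : relation (config n)) (c : config n) : Prop :=
  stable c /\
  forall d, clos_refl_trans _ (chain_step step) c d ->
            clos_refl_trans _ (chain_step step) d c.

Definition SSM_recurrent n (c : config n) := recurrent (@ssm_topple_step n) c.
Definition ASM_recurrent n (c : config n) := recurrent (@asm_topple_step n) c.

Definition cycle_adj n (i j : 'I_n) : bool := (j == ordS i) || (i == ordS j).

Definition cycle_orientation n (arc : rel 'I_n) : Prop :=
  (forall i j, arc i j -> cycle_adj i j) /\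
  (forall i j, cycle_adj i j -> arc i j (+) arc j i).

Definition acyclic n (arc : rel 'I_n) : Prop :=
  ~ exists i j, arc i j && connect arc j i.

Definition indeg n (arc : rel 'I_n) (i : 'I_n) : nat := #|[pred j | arc j i]|.

(* Recurrence amounts to reachability from the maximal stable configuration 2,
   since every stable configuration reaches 2 by adding grains.

   Necessity: along every path of the chain from 2 we maintain an orientation O
   of C_n with in_O <= c.  When i topples, the edges along which it sent a grain
   are turned away from i; in the ASM both edges are, so O keeps a source, and an
   orientation of a cycle with a source is acyclic.

   Sufficiency: for an acyclic O with in_O <= c, toppling every vertex once in
   reverse topological order (burning) brings c + 1 back to c.  Hence adding c
   to 2 = (c + 1) + 1 stabilises to c, and by uniqueness of ASM stabilisation
   the chain reaches c from 2.  In the SSM a cyclic orientation has no source,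
   so c >= 1; an explicit toppling wave takes 2 down to 1, and c is reached from
   1 by adding grains. *)

From Stdlib Require Import Relations.
From mathcomp Require Import all_boot zify.
Set Implicit Arguments. Unset Strict Implicit. Unset Printing Implicit Defensive.

Lemma connect_invariant (T : finType) (e : rel T) (P : pred T) :
  (forall x y, P x -> e x y -> P y) -> forall x y, P x -> connect e x y -> P y.
Proof.
move=> eP x y Px /connectP [p ep ->] {y}.
by elim: p x Px ep => //= z p IHp x Px /andP [exz ep]; apply: IHp (eP _ _ Px exz) ep.
Qed.

Lemma acyclic_has_sink (T : finType) (e : rel T) (A : {set T}) :
  ~ (exists x y, e x y && connect e y x) -> A != set0 ->
  exists2 v, v \in A & forall w, e v w -> w \notin A.
Proof.
move=> acyc /set0Pn [x0 Ax0].
pose ancestors u := #|[pred w | connect e w u]|.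
have ancestors_lt u w : e u w -> ancestors u < ancestors w.
  move=> euw; apply: proper_card; apply/properP; split.
    by apply/subsetP => t; rewrite !inE => etu; apply: connect_trans etu (connect1 euw).
  exists w; rewrite !inE ?connect0 //; apply/negP => ewu.
  by apply: acyc; exists u, w; rewrite euw ewu.
have [v Av vmax] := @arg_maxnP _ x0 (mem A) ancestors Ax0.
exists v => // w evw; apply/negP => Aw.
have : ancestors w <= ancestors v := vmax w Aw.
by rewrite leqNgt ancestors_lt.
Qed.

Section Cycle.

Variable n : nat.
Implicit Types (i j k u v w : 'I_n) (arc : rel 'I_n) (f : 'I_n -> bool).

Lemma val_ordS i : val (ordS i) = if i.+1 < n then i.+1 else 0.
Proof.
rewrite /=; case: ltnP => [/modn_small //|le_n_iS].
have -> : i.+1 = n by apply/eqP; rewrite eqn_leq le_n_iS ltn_ord.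
by rewrite modnn.
Qed.

Lemma val_ord_pred i : val (ord_pred i) = if val i == 0 then n.-1 else (val i).-1.
Proof.
have lt_i_n := ltn_ord i; rewrite /=; case: eqP => [-> | /eqP i_neq0].
  by rewrite modn_small //; lia.
by rewrite -subn1 -addnBAC ?lt0n // modnDr modn_small; lia.
Qed.

Hypothesis n_gt2 : 2 < n.

Lemma ordS_neq i : (ordS i == i) = false.
Proof. by apply/negbTE; rewrite -val_eqE val_ordS; have := ltn_ord i; case: ifP => /=; lia. Qed.

Lemma ordSS_neq i : (ordS (ordS i) == i) = false.
Proof.
by apply/negbTE; rewrite -val_eqE !val_ordS; have := ltn_ord i; do 2 case: ifP => /=; lia.
Qed.

Lemma ord_pred_neq i : (ord_pred i == i) = false.
Proof. by rewrite -(inj_eq (@ordS_inj n)) ord_predK eq_sym ordS_neq. Qed.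

Lemma ord_pred_neq_ordS i : (ord_pred i == ordS i) = false.
Proof. by rewrite -(inj_eq (@ordS_inj n)) ord_predK eq_sym ordSS_neq. Qed.

(* [f u] tells whether the edge {u, u+1} is oriented from u to u+1. *)
Definition orient f : rel 'I_n :=
  fun u w => ((w == ordS u) && f u) || ((u == ordS w) && ~~ f w).

Lemma orient_orientation f : cycle_orientation (orient f).
Proof.
split=> u w; rewrite /orient /cycle_adj.
  by case/orP=> /andP [-> _]; rewrite ?orbT.
by case/orP=> /eqP ->; rewrite eqxx [_ == ordS (ordS _)]eq_sym ordSS_neq /=; case: (f _).
Qed.

Lemma orient_ordS f u : orient f u (ordS u) = f u.
Proof. by rewrite /orient eqxx eq_sym ordSS_neq orbF. Qed.

Lemma orient_ordS_rev f u : orient f (ordS u) u = ~~ f u.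
Proof. by rewrite /orient eqxx eq_sym ordSS_neq. Qed.

Lemma indeg_orientation arc k : cycle_orientation arc ->
  indeg arc k = arc (ord_pred k) k + arc (ordS k) k.
Proof.
move=> [arc_adj _]; rewrite /indeg -sum1_card big_mkcond /=.
rewrite (bigD1 (ord_pred k)) // (bigD1 (ordS k)) /=; last by rewrite eq_sym ord_pred_neq_ordS.
rewrite big1 ?addn0 ?inE; first by case: (arc _ k); case: (arc _ k).
move=> j /andP [j_neq_pred j_neq_succ]; rewrite inE; case arc_jk: (arc j k) => //.
move: (arc_adj _ _ arc_jk); rewrite /cycle_adj (negbTE j_neq_succ) /=.
by rewrite orbF eq_sym (can2_eq (@ordSK n) (@ord_predK n)) (negbTE j_neq_pred).
Qed.

Lemma indeg_orient f k : indeg (orient f) k = f (ord_pred k) + ~~ f k.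
Proof.
rewrite indeg_orientation ?orient_ordS_rev; last exact: orient_orientation.
by rewrite -{2}(ord_predK k) orient_ordS.
Qed.

Section Orientation.

Variable arc : rel 'I_n.
Hypothesis arc_orientation : cycle_orientation arc.

Lemma orientation_turn x y : arc x (ordS x) -> arc (ordS x) y -> y = ordS (ordS x).
Proof.
move=> arc_x arc_y; case/orP: (arc_orientation.1 _ _ arc_y) => /eqP // /ordS_inj y_x.
subst y; move: (arc_orientation.2 x (ordS x)); rewrite /cycle_adj eqxx arc_x arc_y.
by move/(_ isT).
Qed.

(* A closed walk starting with a clockwise arc keeps turning clockwise; if some
   edge {u, u+1} were counter-clockwise, the clockwise distance from u+1 would
   strictly increase along the walk, which cannot return to its start. *)
Lemma clockwise_cycle i : arc i (ordS i) -> connect arc (ordS i) i ->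
  forall u, arc u (ordS u).
Proof.
move=> arc_i walk u; apply/negPn/negP => arc_u.
pose dist (v : 'I_n) := if u < v then v - u.+1 else v + n - u.+1.
have dist_ordS v : arc v (ordS v) -> dist (ordS v) = (dist v).+1.
  move=> arc_v; have v_neq_u : v != u :> nat by apply: contraNneq arc_u => /val_inj <-.
  rewrite /dist val_ordS; move: v_neq_u (ltn_ord v) (ltn_ord u).
  by case: (ltnP v.+1 n) => /= ?; case: (ltnP u v) => ?; try case: ifP; lia.
pose P y := arc (ord_pred y) y && (dist (ordS i) <= dist y).
have P_closed x y : P x -> arc x y -> P y.
  move=> /andP [arc_px le_ix] arc_xy.
  have y_succ : y = ordS x.
    by move: arc_px arc_xy; rewrite -{2 3 4}(ord_predK x); apply: orientation_turn.
  by subst y; rewrite /P ordSK arc_xy (dist_ordS x arc_xy) leqW.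
have := connect_invariant P_closed _ walk; rewrite /P ordSK arc_i leqnn dist_ordS //.
by rewrite ltnn andbF => /(_ isT).
Qed.

End Orientation.

Lemma orientation_rev arc : cycle_orientation arc -> cycle_orientation [rel x y | arc y x].
Proof.
move=> [arc_adj arc_xor]; split=> u w /=.
  by move/arc_adj; rewrite /cycle_adj orbC.
by rewrite /cycle_adj orbC => /arc_xor; rewrite addbC.
Qed.

Lemma source_acyclic arc s : cycle_orientation arc -> indeg arc s = 0 -> acyclic arc.
Proof.
move=> arcO; rewrite indeg_orientation // => /eqP; rewrite addn_eq0 !eqb0.
move=> /andP [/negP no_arc_pred /negP no_arc_succ] [i [j /andP [arc_ij walk]]].
case/orP: (arcO.1 _ _ arc_ij) => /eqP ?; subst.
  by apply: no_arc_pred; rewrite -{2}(ord_predK s) (clockwise_cycle arcO arc_ij walk).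
have rev_walk : connect [rel x y | arc y x] (ordS j) j by rewrite connect_rev.
by apply: no_arc_succ; apply: (clockwise_cycle (orientation_rev arcO) _ rev_walk).
Qed.

End Cycle.

Local Notation rt R := (clos_refl_trans _ R).
Local Notation asm_topple c i := (topple c i true true true).

(* Entries [c k] and boolean tests [k == i] of a configuration are elaborated
   with different (convertible) instances depending on their origin, which
   [lia] would treat as unrelated atoms; abstract them first. *)
Ltac config_lia :=
  repeat match goal with
  | |- context [fun_of_fin ?f ?x] => let a := fresh "a" in move: (fun_of_fin f x) => a
  | |- context [nat_of_bool ?b] =>
      lazymatch b with true => fail | false => fail | _ =>
        let a := fresh "b" in move: (nat_of_bool b) => a end
  end; intros; lia.

Lemma sum_eq1 (T : finType) (t : T) : \sum_s ((s == t) : nat) = 1.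
Proof. by rewrite (bigD1 t) //= eqxx big1 // => s /negbTE ->. Qed.

Section Abelian.

Variable n : nat.
Implicit Types (c d x : config n) (i j k : 'I_n).
Local Notation asm := (@asm_topple_step n).

Definition grains c := \sum_k c k.

Definition cadd c x : config n := [ffun k => c k + x k].

Lemma topple_ge c i j bl br bs : j != i -> c j <= topple c i bl br bs j.
Proof. by move=> /negbTE ji; rewrite ffunE ji -addnA leq_addr. Qed.

Lemma asm_topple_balance c i k : 3 <= c i ->
  asm_topple c i k + 3 * (k == i) = c k + (k == ord_pred i) + (k == ordS i).
Proof. by rewrite ffunE !andbT; case: eqVneq => [->|] /=; config_lia. Qed.

Lemma grains_asm_topple c i : 3 <= c i -> grains (asm_topple c i) < grains c.
Proof.
move=> ci; have balance : \sum_k (asm_topple c i k + 3 * (k == i)) =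
                          \sum_k (c k + (k == ord_pred i) + (k == ordS i)).
  by apply: eq_bigr => k _; apply: asm_topple_balance.
have topple_side : \sum_k (asm_topple c i k + 3 * (k == i)) = grains (asm_topple c i) + 3.
  by rewrite big_split -big_distrr sum_eq1.
have config_side : \sum_k (c k + (k == ord_pred i) + (k == ordS i)) = grains c + 2.
  by rewrite !big_split !sum_eq1; apply: esym (addnA _ 1 1).
by move: balance; rewrite topple_side config_side; lia.
Qed.

Lemma asm_topple_comm c i j : i != j -> 3 <= c i -> 3 <= c j ->
  asm_topple (asm_topple c i) j = asm_topple (asm_topple c j) i.
Proof.
move=> ij ci cj; have cji := leq_trans ci (topple_ge c true true true ij).
have cij : 3 <= asm_topple c i j by apply: leq_trans cj (topple_ge _ _ _ _ _); rewrite eq_sym.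
apply/ffunP => k; move: (asm_topple_balance k cij) (asm_topple_balance k cji).
by move: (asm_topple_balance k ci) (asm_topple_balance k cj); config_lia.
Qed.

Lemma asm_topple_cadd c x i : 3 <= c i ->
  asm_topple (cadd c x) i = cadd (asm_topple c i) x.
Proof.
move=> ci; have cxi : 3 <= cadd c x i by rewrite ffunE (leq_trans ci) ?leq_addr.
apply/ffunP => k; move: (asm_topple_balance k ci) (asm_topple_balance k cxi).
by rewrite !ffunE; config_lia.
Qed.

Lemma asm_rt_cadd c d x : rt asm c d -> rt asm (cadd c x) (cadd d x).
Proof.
elim=> [c' d' [i [ci ->]] | c' | c1 c2 c3 _ r12 _ r23]; last exact: rt_trans r12 r23.
  apply: rt_step; exists i; split; last by rewrite asm_topple_cadd.
  by rewrite ffunE (leq_trans ci) ?leq_addr.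
exact: rt_refl.
Qed.

Lemma stable_or_unstable c : stable c \/ exists i, 3 <= c i.
Proof.
case: (boolP [exists i, 3 <= c i]) => [/existsP | /existsPn unst]; first by right.
by left=> i; rewrite /wheel_deg ltnNge unst.
Qed.

Lemma stable_asm_normal c d : stable c -> ~ asm c d.
Proof. by move=> sc [i [ci _]]; move: (sc i); rewrite /wheel_deg ltnNge ci. Qed.

Lemma asm_stabilisation_exists c : exists2 d, rt asm c d & stable d.
Proof.
have [N] := ubnP (grains c); elim: N c => // N IHN c /ltnSE grains_c.
case: (stable_or_unstable c) => [sc | [i ci]]; first by exists c; first exact: rt_refl.
have [d rd sd] := IHN _ (leq_trans (grains_asm_topple ci) grains_c).
by exists d => //; apply: rt_trans rd; apply: rt_step; exists i.
Qed.

Lemma asm_stabilisation_unique c d1 d2 :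
  rt asm c d1 -> stable d1 -> rt asm c d2 -> stable d2 -> d1 = d2.
Proof.
have [N] := ubnP (grains c); elim: N c d1 d2 => // N IHN c ? ? /ltnSE grains_c.
move=> /(clos_rt_rt1n _ _ _ _) [|? d1 [i [ci ->]] /(clos_rt1n_rt _ _ _ _) r1] s1.
  by move=> /(clos_rt_rt1n _ _ _ _) [// | ? ? step _] _; case: (stable_asm_normal s1 step).
move=> /(clos_rt_rt1n _ _ _ _) [|? d2 [j [cj ->]] /(clos_rt1n_rt _ _ _ _) r2] s2.
  by case: (stable_asm_normal s2 (ex_intro _ i (conj ci erefl))).
have IH_at k d d' : 3 <= c k -> rt asm (asm_topple c k) d -> stable d ->
    rt asm (asm_topple c k) d' -> stable d' -> d = d'.
  by move=> ck; apply: IHN; apply: leq_trans (grains_asm_topple ck) grains_c.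
have [eq_ij | ij] := eqVneq i j; first by subst j; exact: IH_at r1 s1 r2 s2.
have step_j : asm (asm_topple c i) (asm_topple (asm_topple c i) j).
  by exists j; split=> //; apply: leq_trans cj (topple_ge _ _ _ _ _); rewrite eq_sym.
have step_i : asm (asm_topple c j) (asm_topple (asm_topple c i) j).
  exists i; split; first exact: leq_trans ci (topple_ge _ _ _ _ ij).
  by rewrite asm_topple_comm.
have [d3 r3 s3] := asm_stabilisation_exists (asm_topple (asm_topple c i) j).
have r3i : rt asm (asm_topple c i) d3 by apply: rt_trans r3; apply: rt_step.
have r3j : rt asm (asm_topple c j) d3 by apply: rt_trans r3; apply: rt_step.
by rewrite (IH_at i d1 d3 ci r1 s1 r3i s3) (IH_at j d2 d3 cj r2 s2 r3j s3).
Qed.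

End Abelian.

Definition const_config n k : config n := [ffun=> k].

Lemma stable_const2 n : stable (const_config n 2).
Proof. by move=> k; rewrite ffunE. Qed.

Lemma in_setU1_nat (T : finType) (A : {set T}) v k :
  v \notin A -> ((k \in v |: A) : nat) = (k == v) + (k \in A).
Proof. by move=> vA; rewrite in_setU1; case: eqVneq => [->|] //=; rewrite (negbTE vA). Qed.

Section Burning.

Variables (n : nat) (arc : rel 'I_n) (c : config n).
Hypotheses (n_gt2 : 2 < n) (arc_orientation : cycle_orientation arc).
Hypothesis indeg_le : forall k, indeg arc k <= c k.
Implicit Types (d : config n) (T : {set 'I_n}) (k v w : 'I_n).
Local Notation asm := (@asm_topple_step n).

(* [d] is what remains of [c + 1] after toppling every vertex of [T] once. *)
Definition burnt T d :=
  forall k, d k + 3 * (k \in T) = c k + 1 + (ord_pred k \in T) + (ordS k \in T).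

Lemma burnt0 : burnt set0 (cadd c (const_config n 1)).
Proof. by move=> k; rewrite !inE !ffunE /= muln0 !addn0. Qed.

Lemma adj_arc_or_mem T v w : cycle_adj v w ->
  (forall w, arc v w -> w \in T) -> 0 < arc w v + (w \in T).
Proof.
rewrite addn_gt0 !lt0b => vw out_v.
have : arc w v (+) arc v w by apply: arc_orientation.2; rewrite /cycle_adj orbC.
by case: (arc w v) => //= /out_v.
Qed.

Lemma burn_step T d v : burnt T d -> v \notin T -> (forall w, arc v w -> w \in T) ->
  3 <= d v /\ burnt (v |: T) (asm_topple d v).
Proof.
move=> burnt_d vT out_v; have dv : 3 <= d v.
  have adj_pred : cycle_adj v (ord_pred v) by rewrite /cycle_adj ord_predK eqxx orbT.
  have adj_succ : cycle_adj v (ordS v) by rewrite /cycle_adj eqxx.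
  have := adj_arc_or_mem adj_pred out_v; have := adj_arc_or_mem adj_succ out_v.
  move: (burnt_d v) (indeg_le v); rewrite (negbTE vT) indeg_orientation //; config_lia.
split=> // k; move: (burnt_d k) (asm_topple_balance k dv).
rewrite !in_setU1_nat // -!(can2_eq (@ordSK n) (@ord_predK n)).
by rewrite [ord_pred _ == _](can2_eq (@ord_predK n) (@ordSK n)); config_lia.
Qed.

Hypothesis arc_acyclic : acyclic arc.

Lemma burnt_stabilises T d : burnt T d -> rt asm d c.
Proof.
have [N] := ubnP #|~: T|; elim: N T d => // N IHN T d /ltnSE card_T burnt_d.
have [TC0 | /(acyclic_has_sink arc_acyclic) [v vT out_v]] := eqVneq (~: T) set0.
  have T_full : T = setT by rewrite -[T]setCK TC0 setC0.
  have -> : d = c; last exact: rt_refl.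
  by apply/ffunP => k; move: (burnt_d k); rewrite T_full !inE; config_lia.
rewrite inE in vT; have out_v' w : arc v w -> w \in T by move/out_v; rewrite inE negbK.
have [dv burnt_v] := burn_step burnt_d vT out_v'.
have card_v : #|~: (v |: T)| < N.
  by rewrite setCU setIC -setDE; move: card_T; rewrite (cardsD1 v (~: T)) inE vT.
by apply: rt_trans (IHN _ _ card_v burnt_v); apply: rt_step; exists v.
Qed.

Lemma asm_burning : rt asm (cadd c (const_config n 1)) c.
Proof. exact: burnt_stabilises burnt0. Qed.

End Burning.

Lemma clos_rt_mono (A : Type) (R S : relation A) :
  (forall x y, R x y -> S x y) -> forall x y, rt R x y -> rt S x y.
Proof.
move=> RS x y; elim=> [? ? /RS | ? | ? ? ? _ ? _];
  [exact: rt_step | exact: rt_refl | exact: rt_trans].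
Qed.

Lemma rt_invariant (A : Type) (R : relation A) (P : A -> Prop) :
  (forall x y, P x -> R x y -> P y) -> forall x y, P x -> rt R x y -> P y.
Proof.
move=> PR x y Px r; elim: r Px => [a b Rab Pa | // | a b c _ IHab _ IHbc Pa].
  exact: PR Pa Rab.
exact: IHbc (IHab Pa).
Qed.

Section Chain.

Variable n : nat.
Implicit Types (c d x : config n) (i k : 'I_n).

Lemma grains_add_grain x i : grains (add_grain x i) = (grains x).+1.
Proof.
by rewrite /grains -addn1 -(sum_eq1 i) -big_split; apply: eq_bigr => k _; rewrite ffunE.
Qed.

Lemma config_ind (P : config n -> Prop) : P (const_config n 0) ->
  (forall x i, P x -> P (add_grain x i)) -> forall x, P x.
Proof.
move=> P0 P_add x; have [N] := ubnP (grains x); elim: N x => // N IHN x /ltnSE grains_x.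
have [/existsP [i xi] | /existsPn x0] := boolP [exists i, 0 < x i].
  pose y := [ffun k => x k - (k == i)].
  have x_eq : x = add_grain y i.
    by apply/ffunP => k; move: xi; rewrite !ffunE; case: eqVneq => [->|]; config_lia.
  by rewrite x_eq grains_add_grain in grains_x *; apply/P_add/IHN.
suff -> : x = const_config n 0 by [].
by apply/ffunP => k; move: (x0 k); rewrite ffunE; config_lia.
Qed.

Lemma cadd0 c : cadd c (const_config n 0) = c.
Proof. by apply/ffunP => k; rewrite !ffunE addn0. Qed.

Lemma cadd_add_grain c x i : cadd c (add_grain x i) = cadd (add_grain c i) x.
Proof. by apply/ffunP => k; rewrite !ffunE; config_lia. Qed.

Lemma stable_le c d : stable d -> (forall k, c k <= d k) -> stable c.
Proof. by move=> sd cd k; apply: leq_ltn_trans (cd k) (sd k). Qed.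

Variable step : relation (config n).
Local Notation chain := (chain_step step).

Lemma chain_add_grain c i : stable (add_grain c i) -> chain c (add_grain c i).
Proof.
move=> s_ci; split; last by exists i; split; first exact: rt_refl.
by apply: (stable_le (c := c) s_ci) => k; rewrite ffunE leq_addr.
Qed.

Lemma chain_cadd c x : stable (cadd c x) -> rt chain c (cadd c x).
Proof.
elim/config_ind: x c => [c | x i IHx c]; first by rewrite cadd0 => _; exact: rt_refl.
rewrite cadd_add_grain => s_cx; apply: rt_trans (IHx _ s_cx); apply/rt_step/chain_add_grain.
by apply: (stable_le (c := add_grain c i) s_cx) => k; rewrite [cadd _ _ _]ffunE leq_addr.
Qed.

Lemma chain_le c d : stable d -> (forall k, c k <= d k) -> rt chain c d.
Proof.
move=> sd cd; have d_eq : d = cadd c [ffun k => d k - c k].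
  by apply/ffunP => k; move: (cd k); rewrite !ffunE; config_lia.
by rewrite d_eq in sd *; apply: chain_cadd.
Qed.

Lemma chain_stable c d : stable c -> rt chain c d -> stable d.
Proof. by apply: rt_invariant => ? ? _ [_ [i [_ ?]]]. Qed.

Lemma chain_invariant (P : config n -> Prop) :
  (forall c i, P c -> P (add_grain c i)) -> (forall c d, P c -> step c d -> P d) ->
  forall c d, P c -> rt chain c d -> P d.
Proof.
move=> P_add P_step; apply: rt_invariant => c d Pc [_ [i [r _]]].
exact: rt_invariant P_step _ _ (P_add _ i Pc) r.
Qed.

Lemma recurrentE c : recurrent step c <-> stable c /\ rt chain (const_config n 2) c.
Proof.
have to_top d : stable d -> rt chain d (const_config n 2).
  by move=> sd; apply: chain_le (@stable_const2 n) _ => k; rewrite ffunE; apply: sd.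
split=> [[sc rec] | [sc top_c]]; first by split=> //; apply/rec/to_top.
by split=> // d cd; apply: rt_trans (to_top _ (chain_stable sc cd)) top_c.
Qed.

End Chain.

Section AsmChain.

Variable n : nat.
Implicit Types (c d x : config n).
Local Notation asm := (@asm_topple_step n).

Lemma asm_chain_stabilisation c x : stable c ->
  exists d, [/\ rt (chain_step asm) c d, stable d & rt asm (cadd c x) d].
Proof.
elim/config_ind: x c => [c sc | x i IHx c sc].
  by exists c; rewrite cadd0; split=> //; apply: rt_refl.
have [c1 r1 s1] := asm_stabilisation_exists (add_grain c i).
have [d [rd sd rxd]] := IHx c1 s1.
exists d; split=> //; first by apply: rt_trans rd; apply: rt_step; split=> //; exists i.
by rewrite cadd_add_grain; apply: rt_trans rxd; apply: asm_rt_cadd.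
Qed.

Lemma asm_chain_from_top (arc : rel 'I_n) c : 2 < n -> stable c ->
  cycle_orientation arc -> acyclic arc -> (forall k, indeg arc k <= c k) ->
  rt (chain_step asm) (const_config n 2) c.
Proof.
move=> n_gt2 sc arcO arc_acyclic indeg_le.
have [d [rd sd r_top_c]] := asm_chain_stabilisation c (@stable_const2 n).
suff -> : c = d by [].
have burn := asm_burning n_gt2 arcO indeg_le arc_acyclic.
apply: asm_stabilisation_unique r_top_c sd => //.
have -> : cadd (const_config n 2) c = cadd (cadd c (const_config n 1)) (const_config n 1).
  by apply/ffunP => k; rewrite !ffunE; config_lia.
exact: rt_trans (asm_rt_cadd _ burn) burn.
Qed.

End AsmChain.

Section Reorientation.

Variables (n : nat) (f : 'I_n -> bool) (c : config n).
Hypothesis n_gt2 : 2 < n.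
Implicit Types (i k u : 'I_n).

(* The edges along which [i] sent a grain now point away from [i]. *)
Definition reorient i (bl br : bool) u :=
  if (u == ord_pred i) && bl then false else if (u == i) && br then true else f u.

Lemma indeg_reorient_topple i (bl br bs : bool) :
  (forall k, indeg (orient f) k <= c k) -> 3 <= c i ->
  forall k, indeg (orient (reorient i bl br)) k <= topple c i bl br bs k.
Proof.
move=> indeg_le ci k; move: (indeg_le k); rewrite !(indeg_orient n_gt2) /reorient ffunE.
rewrite (inj_eq (@ord_pred_inj n)) (can2_eq (@ord_predK n) (@ordSK n)).
have [->|ki] := eqVneq k i.
  rewrite [i == ord_pred i]eq_sym [i == ordS i]eq_sym ord_pred_neq // ordS_neq //=.
  by move: ci; case: bl; case: br; case: bs; case: (f i); case: (f (ord_pred i)) => /=; config_lia.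
have [->|kp] := eqVneq k (ord_pred i).
  rewrite ord_pred_neq_ordS //=.
  by case: bl; case: (f (ord_pred i)); case: (f (ord_pred (ord_pred i))) => /=; config_lia.
have [->|ks] := eqVneq k (ordS i).
  rewrite ordSK /=.
  by case: br; case: (f i); case: (f (ordS i)) => /=; config_lia.
by rewrite /= !addn0.
Qed.

End Reorientation.

Ltac config_compute :=
  apply/ffunP; let u := fresh "u" in intro u;
  rewrite !ffunE -?val_eqE ?val_ordS ?val_ord_pred /= ?andbF ?andbT ?addn0;
  move: (nat_of_ord u) (ltn_ord u) => a a_lt_n;
  repeat case: ifP => ?;
  repeat match goal with |- context [nat_of_bool (?x == ?y)] => case: (x =P y) => ? end;
  rewrite /=; lia.

Section Wave.

Variable n : nat.
Hypothesis n_gt2 : 2 < n.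
Local Notation ssm := (@ssm_topple_step n).

(* Vertex 0 has toppled onto both neighbours, then vertices 1, ..., j-1 have
   each passed one grain forward and one to the sink. *)
Definition wave_config (j : nat) : config n := [ffun u : 'I_n =>
  if val u == 0 then 0 else if val u < j then 1
  else if val u == n.-1 then 3 + (j == n.-1) else if val u == j then 3 else 2].

Lemma ssm_wave_step j : 0 < j < n.-1 -> ssm (wave_config j) (wave_config j.+1).
Proof.
move=> j_range; have lt_j_n : j < n by lia.
exists (Ordinal lt_j_n); split.
  by rewrite ffunE /wheel_deg /=; repeat case: ifP; lia.
by exists false, true, true; config_compute.
Qed.

Lemma ssm_wave j : 0 < j <= n.-1 -> rt ssm (wave_config 1) (wave_config j).
Proof.
elim: j => [// | j IHj] j_range; have [-> | j_gt0] := posnP j; first exact: rt_refl.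
apply: rt_trans (IHj _) (rt_step _ _ _ _ (ssm_wave_step _)); lia.
Qed.

Lemma ssm_chain_top_to_one :
  rt (chain_step ssm) (const_config n 2) (const_config n 1).
Proof.
have n_gt0 : 0 < n by lia.
have last_lt : n.-1 < n by lia.
pose v0 := Ordinal n_gt0; pose vl := Ordinal last_lt.
pose last_config m : config n := [ffun u : 'I_n =>
  if val u == 0 then 0 else if val u == n.-1 then m else 1].
have stable_last : stable (last_config 2).
  by move=> u; rewrite ffunE; case: ifP => //; case: ifP.
apply: (@rt_trans _ _ _ (last_config 2)); apply: rt_step; split=> //.
- exact: (@stable_const2 n).
- exists v0; split=> //.
  apply: (@rt_trans _ _ _ (wave_config 1)).
    apply: rt_step; exists v0; split; first by rewrite !ffunE eqxx.
    by exists true, true, true; config_compute.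
  apply: (@rt_trans _ _ _ (wave_config n.-1)); first by apply: ssm_wave; lia.
  apply: (@rt_trans _ _ _ (last_config 3)); apply: rt_step; exists vl.
    split; first by rewrite ffunE /wheel_deg /=; repeat case: ifP; lia.
    by exists false, false, true; config_compute.
  split; first by rewrite ffunE /wheel_deg /=; repeat case: ifP; lia.
  by exists false, false, true; config_compute.
- exists vl; split; last by move=> u; rewrite ffunE.
  apply: rt_step; exists vl; split.
    by rewrite !ffunE eqxx /wheel_deg /=; repeat case: ifP; lia.
  by exists false, true, true; config_compute.
Qed.

End Wave.

Lemma chain_step_mono n (R S : relation (config n)) :
  (forall c d, R c d -> S c d) -> forall c d, chain_step R c d -> chain_step S c d.
Proof.
by move=> RS c d [sc [i [r sd]]]; split=> //; exists i; split=> //; apply: clos_rt_mono r.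
Qed.

Lemma asm_ssm_topple_step n (c d : config n) : asm_topple_step c d -> ssm_topple_step c d.
Proof. by move=> [i [ci ->]]; exists i; split=> //; exists true, true, true. Qed.

Section Characterisation.

Variable n : nat.
Hypothesis n_gt2 : 2 < n.
Implicit Types (c : config n) (f : 'I_n -> bool) (arc : rel 'I_n).
Local Notation ssm := (@ssm_topple_step n).
Local Notation asm := (@asm_topple_step n).
Local Notation top := (const_config n 2).

Lemma indeg_orient_le2 f k : indeg (orient f) k <= 2.
Proof. by rewrite (indeg_orient n_gt2); case: (f _); case: (f _). Qed.

Lemma orientation_of_ssm_chain c : rt (chain_step ssm) top c ->
  exists f, forall k, indeg (orient f) k <= c k.
Proof.
apply: (chain_invariant (P := fun d => exists f, forall k, indeg (orient f) k <= d k))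
  => [d i [f f_le] | d d' [f f_le] [i [di [bl [br [bs ->]]]]] |].
- by exists f => k; apply: leq_trans (f_le k) _; rewrite ffunE leq_addr.
- by exists (reorient f i bl br); apply: indeg_reorient_topple.
- by exists xpredT => k; rewrite ffunE indeg_orient_le2.
Qed.

Lemma sourced_orientation_of_asm_chain c : rt (chain_step asm) top c ->
  exists f s, indeg (orient f) s = 0 /\ forall k, indeg (orient f) k <= c k.
Proof.
apply: (chain_invariant (P := fun d => exists f s,
  indeg (orient f) s = 0 /\ forall k, indeg (orient f) k <= d k))
  => [d i [f [s [src f_le]]] | d d' [f [s [_ f_le]]] [i [di ->]] |].
- by exists f, s; split=> // k; apply: leq_trans (f_le k) _; rewrite ffunE leq_addr.
- exists (reorient f i true true), i; split; last exact: indeg_reorient_topple.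
  by rewrite (indeg_orient n_gt2) /reorient !eqxx /= [i == _]eq_sym ord_pred_neq.
- have v0 : 'I_n by exists 0; lia.
  exists (pred1 v0), v0; split=> [|k]; last by rewrite ffunE indeg_orient_le2.
  by rewrite (indeg_orient n_gt2) /= ord_pred_neq // eqxx.
Qed.

Lemma ssm_chain_of_orientation c arc : stable c -> cycle_orientation arc ->
  (forall k, indeg arc k <= c k) -> rt (chain_step ssm) top c.
Proof.
move=> sc arcO indeg_le.
have [/existsP [s /eqP src] | /existsPn no_src] := boolP [exists s, indeg arc s == 0].
  apply: clos_rt_mono (chain_step_mono (@asm_ssm_topple_step n)) _ _ _.
  exact: asm_chain_from_top n_gt2 sc arcO (source_acyclic n_gt2 arcO src) indeg_le.
apply: rt_trans (ssm_chain_top_to_one n_gt2) _; apply: chain_le sc _ => k.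
by rewrite ffunE (leq_trans _ (indeg_le k)) // lt0n no_src.
Qed.

End Characterisation.

Theorem mainTheorem2 (n : nat) (hn : 3 <= n) (c : config n) (hc : stable c) :
  (SSM_recurrent c <->
     exists arc : rel 'I_n, cycle_orientation arc /\ forall i, indeg arc i <= c i) /\
  (ASM_recurrent c <->
     exists arc : rel 'I_n, cycle_orientation arc /\ acyclic arc /\
                            forall i, indeg arc i <= c i).
Proof.
rewrite /SSM_recurrent /ASM_recurrent !recurrentE; split; split.
- case=> _ /(orientation_of_ssm_chain hn) [f f_le].
  by exists (orient f); split; first exact: orient_orientation.
- by case=> arc [arcO indeg_le]; split; last exact: ssm_chain_of_orientation arcO indeg_le.
- case=> _ /(sourced_orientation_of_asm_chain hn) [f [s [src f_le]]].
  exists (orient f); have fO := orient_orientation hn f.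
  by split=> //; split=> //; apply: (source_acyclic hn fO src).
- case=> arc [arcO [arc_acyclic indeg_le]]; split=> //.
  exact: asm_chain_from_top hn hc arcO arc_acyclic indeg_le.
Qed.
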